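(* Let $\mathcal P$ and $\mathcal U$ be a Preisach operator and its potential operator satisfying the assumptions in the context, so that $q\frac{d}{dt}\mathcal P[q]-\frac{d}{dt}\mathcal U[q]\ge0$ a.e. for all $q\in W^{1,1}(0,T)$. Let $c>0$, $\kappa>0$, $e\in\mathbb R$ be constants and $f\in C^1(\mathbb R)$ with $f>0$ and $f'$ bounded on bounded sets. For $\varepsilon,E\in W^{1,1}(0,T)$ set $q=E/f(\varepsilon)$ and $$\sigma=c\varepsilon-eE+f'(\varepsilon)\,\mathcal U[q],\qquad D=e\varepsilon+\kappa E+\mathcal P[q],\qquad F=\tfrac c2\varepsilon^2+\tfrac\kappa2E^2+f(\varepsilon)\,\mathcal U[q].$$ Then $$\dot\varepsilon\,\sigma+\dot D\,E-\dot F\ge0\quad\text{a.e. in }(0,T).$$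
   Context: Play operator: for $r>0$ and $q\in W^{1,1}(0,T)$, $\xi_r=\xi_r[q]$ solves $|q-\xi_r|\le r$, $\dot\xi_r(q-\xi_r-rz)\ge0$ a.e. for all $|z|\le1$, $\xi_r(0)=\max\{q(0)-r,\min\{0,q(0)+r\}\}$. Preisach operator $\mathcal P[q](t)=\int_0^\infty g(r,\xi_r[q](t))\,dr$ with $g(r,0)=0$, $0\le\partial_vg(r,v)\le\mu(r)$, $\mu\in L^1(0,\infty)$, $|v|\partial_vg(r,v)\le\mu_1(r)$ with $\mu_1\in L^1(0,\infty)$; potential $\mathcal U[q](t)=\int_0^\infty G(r,\xi_r[q](t))\,dr$, $G(r,v)=\int_0^v v'\partial_vg(r,v')\,dv'$. *)

From Stdlib Require Import Reals Lra List.
Import ListNotations.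
Open Scope R_scope.

(** * Henstock–Kurzweil (gauge) integral on a compact interval [a,b].
    A tagged partition of [lo,b] is a list of (tag, right endpoint) pairs. *)
Fixpoint fine_tagged_partition (delta : R -> R) (lo b : R) (P : list (R * R)) : Prop :=
  match P with
  | [] => lo = b
  | (t, c) :: P' =>
      lo < c /\ lo <= t <= c /\ t - delta t < lo /\ c < t + delta t /\
      fine_tagged_partition delta c b P'
  end.

Fixpoint riemann_sum (f : R -> R) (lo : R) (P : list (R * R)) : R :=
  match P with
  | [] => 0
  | (t, c) :: P' => f t * (c - lo) + riemann_sum f c P'
  end.

Definition HK_integral (f : R -> R) (a b I : R) : Prop :=
  a <= b /\
  forall eps, 0 < eps ->
    exists delta : R -> R, (forall x, 0 < delta x) /\
      forall P, fine_tagged_partition delta a b P ->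
        Rabs (riemann_sum f a P - I) < eps.

Definition HK_oriented (f : R -> R) (a b I : R) : Prop :=
  (a <= b /\ HK_integral f a b I) \/ (b < a /\ HK_integral f b a (- I)).

(** Improper integral \int_0^\infty h(r) dr = I (Hake: HK on [0,oo)). *)
Definition improper_integral_0_inf (h : R -> R) (I : R) : Prop :=
  (forall Rr, 0 < Rr -> exists J, HK_integral h 0 Rr J) /\
  forall eps, 0 < eps -> exists M, forall Rr J,
      M < Rr -> HK_integral h 0 Rr J -> Rabs (J - I) < eps.

Definition improper_integrable_0_inf (h : R -> R) : Prop :=
  exists I, improper_integral_0_inf h I.

(** L^1(0,oo): h and |h| both (HK-)integrable, i.e. Lebesgue integrable. *)
Definition L1_0_inf (h : R -> R) : Prop :=
  improper_integrable_0_inf h /\ improper_integrable_0_inf (fun r => Rabs (h r)).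

Definition null_set (N : R -> Prop) : Prop :=
  forall eps, 0 < eps ->
    exists a b : nat -> R,
      (forall n, a n <= b n) /\
      (forall x, N x -> exists n, a n < x < b n) /\
      (forall n, sum_f_R0 (fun k => b k - a k) n < eps).

Definition ae_on (T : R) (P : R -> Prop) : Prop :=
  exists N, null_set N /\ forall t, 0 < t < T -> ~ N t -> P t.

(** * W^{1,1}(0,T) = absolutely continuous functions on [0,T]. *)
Fixpoint nonoverlapping (lo hi : R) (l : list (R * R)) : Prop :=
  match l with
  | [] => lo <= hi
  | (a, b) :: l' => lo <= a /\ a <= b /\ nonoverlapping b hi l'
  end.

Fixpoint total_length (l : list (R * R)) : R :=
  match l with [] => 0 | (a, b) :: l' => (b - a) + total_length l' end.

Fixpoint total_variation_on (u : R -> R) (l : list (R * R)) : R :=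
  match l with [] => 0 | (a, b) :: l' => Rabs (u b - u a) + total_variation_on u l' end.

Definition W11 (T : R) (u : R -> R) : Prop :=
  forall eps, 0 < eps -> exists delta, 0 < delta /\
    forall l, nonoverlapping 0 T l -> total_length l < delta ->
      total_variation_on u l < eps.

Definition is_play (T r : R) (q xi : R -> R) : Prop :=
  W11 T xi /\
  (forall t, 0 <= t <= T -> Rabs (q t - xi t) <= r) /\
  ae_on T (fun t => forall dxi, derivable_pt_lim xi t dxi ->
             forall z, Rabs z <= 1 -> dxi * (q t - xi t - r * z) >= 0) /\
  xi 0 = Rmax (q 0 - r) (Rmin 0 (q 0 + r)).

Definition preisach_at (h : R -> R -> R) (T : R) (q : R -> R) (t p : R) : Prop :=
  exists xi : R -> R -> R,
    (forall r, 0 < r -> is_play T r q (xi r)) /\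
    improper_integral_0_inf (fun r => h r (xi r t)) p.

From Stdlib Require Import Reals Lra Lia List ZArith Arith.Cantor Classical ClassicalEpsilon.
Import ListNotations.
Open Scope R_scope.

(* Wherever eps, E, P[q] and U[q] are differentiable, the product and chain rules
   give  eps' sigma + D' E - F' = f(eps) (q P[q]' - U[q]'),  so the claim is the
   dissipation inequality for q = E / f(eps) multiplied by f(eps) > 0.  Two facts
   remain.  First, q is absolutely continuous, since f is bounded below by a positive
   constant and Lipschitz on the bounded range of eps.  Second, absolutely continuous
   functions are differentiable almost everywhere (Lebesgue): such a u is the
   difference of its continuous nondecreasing variation function V and of V - u, and
   a continuous nondecreasing F is differentiable outside a null set.  For the latter
   we follow F. Riesz: the rising sun lemma bounds the set where a Dini derivate of F
   is infinite by (F b - F a) / M for every M, and shrinks the set where the lower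
   left derivate is below c while the upper right one exceeds C > c by the factor
   c / C at each iteration; off the countably many such sets all four Dini derivates
   of F agree and are finite. *)

(** * Countable covers and null sets *)

Definition lsum {A} (g : A -> R) (l : list A) : R :=
  fold_right (fun x acc => g x + acc) 0 l.

Lemma lsum_app {A} (g : A -> R) l1 l2 : lsum g (l1 ++ l2) = lsum g l1 + lsum g l2.
Proof. induction l1; simpl; [lra | rewrite IHl1; lra]. Qed.

Lemma lsum_map {A B} (g : B -> R) (f : A -> B) l :
  lsum g (map f l) = lsum (fun x => g (f x)) l.
Proof. induction l; simpl; [| rewrite IHl]; reflexivity. Qed.

Lemma lsum_list_prod {A B} (g : A * B -> R) l l' :
  lsum g (list_prod l l') = lsum (fun x => lsum (fun y => g (x, y)) l') l.
Proof. induction l; simpl; [| rewrite lsum_app, lsum_map, IHl]; reflexivity. Qed.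

Lemma lsum_seq (g : nat -> R) n : lsum g (seq 0 (S n)) = sum_f_R0 g n.
Proof.
  induction n; [simpl; lra |].
  rewrite seq_S, lsum_app, IHn; simpl. lra.
Qed.

Lemma lsum_ge0 {A} (g : A -> R) l : (forall x, 0 <= g x) -> 0 <= lsum g l.
Proof. intros H; induction l; simpl; [lra | specialize (H a); lra]. Qed.

Lemma lsum_incl_le {A} (g : A -> R) (L S : list A) :
  (forall x, 0 <= g x) -> NoDup L -> incl L S -> lsum g L <= lsum g S.
Proof.
  intros Hg HL; revert S; induction HL as [|x L Hx _ IH]; intros S HLS.
  - apply lsum_ge0; assumption.
  - destruct (in_split x S) as [S1 [S2 ->]]; [apply HLS; left; reflexivity |].
    assert (HL : incl L (S1 ++ S2)).
    { intros y Hy. assert (Hy' : In y (S1 ++ x :: S2)) by (apply HLS; right; assumption).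
      apply in_app_or in Hy'; apply in_or_app.
      destruct Hy' as [|[->|]]; tauto. }
    specialize (IH _ HL). rewrite lsum_app in IH |- *; simpl. lra.
Qed.

Lemma lsum_filter {A} (g : A -> R) (P : A -> bool) L :
  lsum g L = lsum g (filter P L) + lsum g (filter (fun x => negb (P x)) L).
Proof. induction L; simpl; [lra |]. destruct (P a); simpl; rewrite IHL; lra. Qed.

(* Partial sums of a nonnegative double series enumerated along the Cantor
   pairing are bounded by the iterated sums, since the first N pairs lie in
   the box [0,N]^2. *)
Lemma sum_cantor_le (c : nat -> nat -> R) (d : nat -> R) (D : R) :
  (forall k j, 0 <= c k j) ->
  (forall k J, sum_f_R0 (c k) J <= d k) ->
  (forall K, sum_f_R0 d K <= D) ->
  forall N, sum_f_R0 (fun n => c (fst (of_nat n)) (snd (of_nat n))) N <= D.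
Proof.
  intros Hc Hd HD N.
  set (g := fun p : nat * nat => c (fst p) (snd p)).
  assert (Hg : forall p, 0 <= g p) by (intros [k j]; apply Hc).
  rewrite <- lsum_seq, <- (lsum_map g of_nat).
  apply Rle_trans with (lsum g (list_prod (seq 0 (S N)) (seq 0 (S N)))).
  - apply lsum_incl_le; [exact Hg | |].
    + apply NoDup_map_NoDup_ForallPairs; [| apply seq_NoDup].
      intros x y _ _ Hxy. rewrite <- (cancel_to_of x), <- (cancel_to_of y), Hxy; reflexivity.
    + intros [k j] Hin. apply in_map_iff in Hin as [n [Hn Hin]]. apply in_seq in Hin.
      pose proof (to_nat_non_decreasing k j) as Hkj. rewrite <- Hn, cancel_to_of in Hkj.
      apply in_prod; apply in_seq; lia.
  - rewrite lsum_list_prod, lsum_seq.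
    apply Rle_trans with (sum_f_R0 d N); [| apply HD].
    apply sum_Rle. intros k _. rewrite (lsum_seq (fun j => g (k, j))). apply (Hd k).
Qed.

Definition cover_le (N : R -> Prop) (S : R) : Prop :=
  exists a b : nat -> R, (forall n, a n <= b n) /\
    (forall x, N x -> exists n, a n < x < b n) /\
    (forall n, sum_f_R0 (fun k => b k - a k) n <= S).

Lemma cover_le_mono (N1 N2 : R -> Prop) S1 S2 :
  (forall x, N2 x -> N1 x) -> S1 <= S2 -> cover_le N1 S1 -> cover_le N2 S2.
Proof.
  intros HN HS [a [b [H1 [H2 H3]]]]. exists a, b; repeat split; auto.
  intros n; specialize (H3 n); lra.
Qed.

Lemma cover_le_interval (N : R -> Prop) lo hi :
  lo <= hi -> (forall x, N x -> lo < x < hi) -> cover_le N (hi - lo).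
Proof.
  intros Hle H.
  exists (fun n => match n with O => lo | _ => 0 end),
         (fun n => match n with O => hi | _ => 0 end).
  repeat split.
  - intros [|n]; lra.
  - intros x Hx; exists O; apply H; assumption.
  - intros n; induction n; simpl; lra.
Qed.

Lemma cover_le_empty (N : R -> Prop) S : (forall x, ~ N x) -> 0 <= S -> cover_le N S.
Proof.
  intros HN HS. apply cover_le_mono with N (0 - 0); [auto | lra |].
  apply cover_le_interval; [lra | intros x Hx; contradiction (HN x)].
Qed.

Lemma cover_le_union (N : nat -> R -> Prop) (S : nat -> R) (D : R) :
  (forall k, cover_le (N k) (S k)) -> (forall K, sum_f_R0 S K <= D) ->
  cover_le (fun x => exists k, N k x) D.
Proof.
  intros HN HD.
  assert (Hab : forall k, {ab : (nat -> R) * (nat -> R) |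
      (forall n, fst ab n <= snd ab n) /\
      (forall x, N k x -> exists n, fst ab n < x < snd ab n) /\
      (forall n, sum_f_R0 (fun j => snd ab j - fst ab j) n <= S k)}).
  { intros k. apply constructive_indefinite_description.
    destruct (HN k) as [a [b H]]. exists (a, b); exact H. }
  set (A := fun k => fst (proj1_sig (Hab k))).
  set (B := fun k => snd (proj1_sig (Hab k))).
  assert (HAB : forall k n, A k n <= B k n) by (intros k; apply (proj2_sig (Hab k))).
  exists (fun n => A (fst (of_nat n)) (snd (of_nat n))),
         (fun n => B (fst (of_nat n)) (snd (of_nat n))).
  repeat split.
  - intros n; apply HAB.
  - intros x [k Hk]. destruct (proj1 (proj2 (proj2_sig (Hab k))) x Hk) as [n Hn].
    exists (to_nat (k, n)). rewrite cancel_of_to. exact Hn.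
  - apply (sum_cantor_le (fun k j => B k j - A k j) S D); [| | exact HD].
    + intros k j; specialize (HAB k j); lra.
    + intros k; apply (proj2_sig (Hab k)).
Qed.

Lemma null_set_cover_le (N : R -> Prop) :
  null_set N <-> forall eps, 0 < eps -> cover_le N eps.
Proof.
  split.
  - intros H eps Heps. destruct (H eps Heps) as [a [b [H1 [H2 H3]]]].
    exists a, b; repeat split; auto. intros n; left; apply H3.
  - intros H eps Heps. destruct (H (eps / 2)) as [a [b [H1 [H2 H3]]]]; [lra |].
    exists a, b; repeat split; auto. intros n; specialize (H3 n); lra.
Qed.

Lemma null_set_subset (N1 N2 : R -> Prop) :
  (forall x, N2 x -> N1 x) -> null_set N1 -> null_set N2.
Proof.
  intros H HN eps Heps. destruct (HN eps Heps) as [a [b [H1 [H2 H3]]]].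
  exists a, b; repeat split; auto.
Qed.

Lemma null_set_union (N : nat -> R -> Prop) :
  (forall k, null_set (N k)) -> null_set (fun x => exists k, N k x).
Proof.
  intros HN. apply null_set_cover_le. intros eps Heps.
  apply cover_le_union with (S := fun k => eps / 2 ^ S k).
  - intros k. apply null_set_cover_le; [apply HN |].
    apply Rdiv_lt_0_compat; [exact Heps | apply pow_lt; lra].
  - assert (Hgeom : forall K, sum_f_R0 (fun k => eps / 2 ^ S k) K = eps - eps / 2 ^ S K).
    { induction K; [simpl; field |].
      rewrite tech5, IHK. simpl. field. apply pow_nonzero; lra. }
    intros K. rewrite Hgeom.
    assert (0 < eps / 2 ^ S K) by (apply Rdiv_lt_0_compat; [exact Heps | apply pow_lt; lra]).
    lra.
Qed.

Lemma null_set_or (N1 N2 : R -> Prop) :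
  null_set N1 -> null_set N2 -> null_set (fun x => N1 x \/ N2 x).
Proof.
  intros H1 H2.
  apply null_set_subset with (fun x => exists k : nat, match k with O => N1 x | _ => N2 x end).
  - intros x [H | H]; [exists O | exists 1%nat]; exact H.
  - apply null_set_union. intros [|k]; assumption.
Qed.

Lemma null_set_opp (N : R -> Prop) : null_set N -> null_set (fun x => N (- x)).
Proof.
  intros H eps Heps. destruct (H eps Heps) as [a [b [H1 [H2 H3]]]].
  exists (fun n => - b n), (fun n => - a n). repeat split.
  - intros n; specialize (H1 n); lra.
  - intros x Hx. destruct (H2 _ Hx) as [n Hn]. exists n; lra.
  - intros n. eapply Rle_lt_trans; [| exact (H3 n)]. right. apply sum_eq; intros; ring.
Qed.

Lemma ae_on_and T (P Q : R -> Prop) : ae_on T P -> ae_on T Q -> ae_on T (fun t => P t /\ Q t).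
Proof.
  intros [N1 [HN1 H1]] [N2 [HN2 H2]]. exists (fun x => N1 x \/ N2 x).
  split; [apply null_set_or; assumption |].
  intros t Ht Hn. split; [apply H1 | apply H2]; tauto.
Qed.

Lemma ae_on_impl T (P Q : R -> Prop) :
  (forall t, 0 < t < T -> P t -> Q t) -> ae_on T P -> ae_on T Q.
Proof. intros H [N [HN H1]]. exists N; split; auto. Qed.

Lemma Rdiv_le_iff A h r : 0 < h -> (A / h <= r <-> A <= r * h).
Proof.
  intros Hh. replace A with (A / h * h) at 2 by (field; lra).
  split; intros H; [apply Rmult_le_compat_r | apply Rmult_le_reg_r with h]; lra.
Qed.

Lemma Rlt_div_iff A h r : 0 < h -> (r < A / h <-> r * h < A).
Proof.
  intros Hh. replace A with (A / h * h) at 2 by (field; lra).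
  split; intros H; [apply Rmult_lt_compat_r | apply Rmult_lt_reg_r with h]; lra.
Qed.

Definition sup_of (E : R -> Prop) : R :=
  match excluded_middle_informative (bound E /\ exists x, E x) with
  | left H => proj1_sig (completeness E (proj1 H) (proj2 H))
  | right _ => 0
  end.

Lemma sup_of_lub E : bound E -> (exists x, E x) -> is_lub E (sup_of E).
Proof.
  intros Hb Hn. unfold sup_of. destruct (excluded_middle_informative _) as [H | H].
  - apply (proj2_sig (completeness E (proj1 H) (proj2 H))).
  - tauto.
Qed.

Lemma is_lub_ge E m y : is_lub E m -> E y -> y <= m.
Proof. intros [H _] Hy; apply H, Hy. Qed.

Lemma is_lub_le E m c : is_lub E m -> (forall y, E y -> y <= c) -> m <= c.
Proof. intros [_ H] Hc; exact (H c Hc). Qed.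

Lemma is_lub_approx E m eps : is_lub E m -> 0 < eps -> exists y, E y /\ m - eps < y.
Proof.
  intros Hm He. apply NNPP. intros Hn.
  enough (m <= m - eps) by lra.
  apply (is_lub_le E); [exact Hm |]. intros y Hy.
  apply Rnot_lt_le. intros Hlt. apply Hn; eauto.
Qed.

Definition nondecreasing_on (F : R -> R) (a b : R) : Prop :=
  forall x y, a <= x -> x <= y -> y <= b -> F x <= F y.

Definition continuous_on (F : R -> R) (a b : R) : Prop :=
  forall t, a <= t <= b -> forall eps, 0 < eps -> exists del, 0 < del /\
    forall s, a <= s <= b -> Rabs (s - t) < del -> Rabs (F s - F t) < eps.

Lemma continuous_on_subinterval F a b a' b' :
  continuous_on F a b -> a <= a' -> b' <= b -> continuous_on F a' b'.
Proof.
  intros H H1 H2 t Ht eps Heps. destruct (H t ltac:(lra) eps Heps) as [d [Hd Hd']].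
  exists d; split; [exact Hd |]. intros s Hs; apply Hd'; lra.
Qed.

Lemma continuous_on_sub_linear F a b k :
  continuous_on F a b -> continuous_on (fun x => F x - k * x) a b.
Proof.
  intros H t Ht eps Heps. destruct (H t Ht (eps / 2)) as [d [Hd Hd']]; [lra |].
  pose proof (Rabs_pos k) as Hk.
  exists (Rmin d (eps / 2 / (Rabs k + 1))). split.
  { apply Rmin_glb_lt; [exact Hd | apply Rdiv_lt_0_compat; lra]. }
  intros s Hs Hst.
  pose proof (Rmin_l d (eps / 2 / (Rabs k + 1))). pose proof (Rmin_r d (eps / 2 / (Rabs k + 1))).
  specialize (Hd' s Hs ltac:(lra)).
  assert (Hlin : Rabs k * Rabs (s - t) < eps / 2).
  { apply Rle_lt_trans with (Rabs k * (eps / 2 / (Rabs k + 1))).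
    - apply Rmult_le_compat_l; lra.
    - apply Rmult_lt_reg_r with (Rabs k + 1); [lra |].
      replace (Rabs k * (eps / 2 / (Rabs k + 1)) * (Rabs k + 1)) with (Rabs k * (eps / 2))
        by (field; lra). nra. }
  replace (F s - k * s - (F t - k * t)) with ((F s - F t) - k * (s - t)) by ring.
  eapply Rle_lt_trans; [apply Rabs_triang |]. rewrite Rabs_Ropp, Rabs_mult. lra.
Qed.

Lemma continuous_on_opp_arg F a b :
  continuous_on F a b -> continuous_on (fun y => F (- y)) (- b) (- a).
Proof.
  intros H t Ht eps Heps. destruct (H (- t) ltac:(lra) eps Heps) as [d [Hd Hd']].
  exists d; split; [exact Hd |]. intros s Hs Hst.
  apply Hd'; [lra |]. replace (- s - - t) with (- (s - t)) by ring. rewrite Rabs_Ropp; exact Hst.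
Qed.

Lemma continuous_on_le_from_right F a b x d c :
  continuous_on F a b -> a <= x -> x < d -> d <= b ->
  (forall y, x < y < d -> F y <= c) -> F x <= c.
Proof.
  intros HF Hax Hxd Hdb Hc. apply Rnot_lt_le. intros Hlt.
  destruct (HF x ltac:(lra) (F x - c)) as [del [Hdel Hnear]]; [lra |].
  set (y := x + Rmin (del / 2) ((d - x) / 2)).
  assert (Hm : 0 < Rmin (del / 2) ((d - x) / 2)) by (apply Rmin_glb_lt; lra).
  pose proof (Rmin_l (del / 2) ((d - x) / 2)). pose proof (Rmin_r (del / 2) ((d - x) / 2)).
  specialize (Hc y ltac:(unfold y; lra)).
  specialize (Hnear y ltac:(unfold y; lra) ltac:(apply Rabs_def1; unfold y; lra)).
  apply Rabs_def2 in Hnear. lra.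
Qed.

(* [qlo n] runs through all rationals [z / (i+1)], each with the width [1 / (i+1)]. *)
Definition qden (n : nat) : R := INR (S (fst (of_nat n))).

Definition qlo (n : nat) : R :=
  let '(k, j) := of_nat (snd (of_nat n)) in IZR (Z.of_nat k - Z.of_nat j) / qden n.

Definition qhi (n : nat) : R := qlo n + / qden n.

Lemma qden_pos n : 0 < qden n.
Proof. apply lt_0_INR; lia. Qed.

Lemma qlo_lt_qhi n : qlo n < qhi n.
Proof. unfold qhi. pose proof (Rinv_0_lt_compat _ (qden_pos n)). lra. Qed.

Lemma qinterval_dense l u : l < u -> exists n, l < qlo n /\ qhi n < u.
Proof.
  intros Hlu. destruct (INR_archimed (u - l) 2) as [i Hi]; [lra |].
  set (m := INR (S i)).
  assert (Hm : 0 < m) by (apply lt_0_INR; lia).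
  assert (Hmi : 2 < m * (u - l)) by (unfold m; rewrite S_INR; nra).
  destruct (archimed (l * m)) as [Hz1 Hz2]. set (z := up (l * m)) in *.
  exists (to_nat (i, to_nat (Z.to_nat z, Z.to_nat (- z)))).
  unfold qhi, qlo, qden. rewrite cancel_of_to; cbn [fst snd]. rewrite cancel_of_to. fold m.
  replace (Z.of_nat (Z.to_nat z) - Z.of_nat (Z.to_nat (- z)))%Z with z by lia.
  split.
  - apply Rlt_div_iff; lra.
  - replace (IZR z / m + / m) with ((IZR z + 1) / m) by (field; lra).
    apply Rmult_lt_reg_r with m; [exact Hm |].
    replace ((IZR z + 1) / m * m) with (IZR z + 1) by (field; lra). nra.
Qed.

Definition interval_disjoint (p q : R * R) : Prop :=
  fst p = snd p \/ fst q = snd q \/ snd p <= fst q \/ snd q <= fst p.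

Lemma ForallOrdPairs_filter {A} (Rel : A -> A -> Prop) (P : A -> bool) L :
  ForallOrdPairs Rel L -> ForallOrdPairs Rel (filter P L).
Proof.
  induction 1 as [|x L Hx _ IH]; simpl; [constructor |].
  destruct (P x); [| exact IH]. constructor; [| exact IH].
  apply Forall_forall. intros y Hy. apply filter_In in Hy.
  rewrite Forall_forall in Hx. apply Hx; tauto.
Qed.

Lemma lsum_increments_le (F : R -> R) L : forall a b, a <= b -> nondecreasing_on F a b ->
  ForallOrdPairs interval_disjoint L ->
  (forall p, In p L -> fst p = snd p \/ (a <= fst p /\ fst p <= snd p /\ snd p <= b)) ->
  lsum (fun p => F (snd p) - F (fst p)) L <= F b - F a.
Proof.
  induction L as [L IH] using (induction_ltof1 _ (@length _)); intros a b Hab HF Hdisj Hin.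
  destruct L as [|[x1 x2] L]; simpl; [pose proof (HF a b ltac:(lra) Hab ltac:(lra)); lra |].
  inversion Hdisj as [|? ? Hx Hdisj']; subst. rewrite Forall_forall in Hx.
  assert (Hin' : forall p, In p L -> fst p = snd p \/ (a <= fst p /\ fst p <= snd p /\ snd p <= b))
    by (intros p Hp; apply Hin; right; exact Hp).
  assert (Hshorter : forall P, ltof _ (@length _) (filter P L) ((x1, x2) :: L))
    by (intros P; unfold ltof; simpl; pose proof (filter_length_le P L); lia).
  destruct (Req_dec x1 x2) as [<- | Hx12].
  { enough (lsum (fun p => F (snd p) - F (fst p)) L <= F b - F a) by lra.
    rewrite <- (filter_true L) at 1. apply IH; auto.
    - apply ForallOrdPairs_filter; exact Hdisj'.
    - intros p Hp; apply filter_In in Hp; apply Hin'; tauto. }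
  destruct (Hin (x1, x2) (or_introl eq_refl)) as [? | [H1 [H12 H2]]]; simpl in *; [contradiction |].
  set (left_of := fun p : R * R => if Rle_dec (snd p) x1 then true else false).
  rewrite (lsum_filter _ left_of L).
  assert (HL : lsum (fun p => F (snd p) - F (fst p)) (filter left_of L) <= F x1 - F a).
  { apply IH; [apply Hshorter | lra | intros u v ? ? ?; apply HF; lra
              | apply ForallOrdPairs_filter; exact Hdisj' |].
    intros p Hp. apply filter_In in Hp as [Hp Hl]. unfold left_of in Hl.
    destruct (Rle_dec (snd p) x1); [| discriminate].
    destruct (Hin' p Hp); [left | right]; lra. }
  assert (HR : lsum (fun p => F (snd p) - F (fst p))
                 (filter (fun p => negb (left_of p)) L) <= F b - F x2).
  { apply IH; [apply Hshorter | lra | intros u v ? ? ?; apply HF; lra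
              | apply ForallOrdPairs_filter; exact Hdisj' |].
    intros p Hp. apply filter_In in Hp as [Hp Hl]. unfold left_of in Hl.
    destruct (Rle_dec (snd p) x1); [discriminate |].
    destruct (Hin' p Hp) as [Hd | Hp']; [left; exact Hd |].
    specialize (Hx p Hp). unfold interval_disjoint in Hx; simpl in Hx.
    destruct Hx as [Hx | [Hx | [Hx | Hx]]]; [lra | left; exact Hx | right; lra | lra]. }
  lra.
Qed.

Lemma sum_increments_le (F : R -> R) a b (al be : nat -> R) N :
  nondecreasing_on F a b -> (forall n, a <= al n /\ al n <= be n /\ be n <= b) ->
  (forall m m', m <> m' -> interval_disjoint (al m, be m) (al m', be m')) ->
  sum_f_R0 (fun k => F (be k) - F (al k)) N <= F b - F a.
Proof.
  intros HF Hab Hdisj.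
  set (I := fun n => (al n, be n)).
  rewrite <- lsum_seq, <- (lsum_map (fun p => F (snd p) - F (fst p)) I).
  assert (Hordered : forall s, ForallOrdPairs interval_disjoint (map I (seq s (S N)))).
  { generalize (S N). intros M; induction M; intros s; simpl; constructor; [| apply IHM].
    apply Forall_forall. intros p Hp. apply in_map_iff in Hp as [m [<- Hm]].
    apply in_seq in Hm. apply Hdisj. lia. }
  pose proof (Hab O).
  apply lsum_increments_le; auto; [lra |].
  intros p Hp. apply in_map_iff in Hp as [m [<- _]]. right. apply Hab.
Qed.

(** * The rising sun lemma *)

Lemma nat_least (P : nat -> Prop) n : P n -> exists m, P m /\ forall k, (k < m)%nat -> ~ P k.
Proof.
  induction n as [n IH] using lt_wf_ind. intros Hn.
  destruct (classic (exists k, (k < n)%nat /\ P k)) as [[k [Hk HPk]] | Hno].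
  - exact (IH k Hk HPk).
  - exists n; split; [exact Hn |]. intros k Hk HPk; eauto.
Qed.

Lemma last_superlevel_point H a b y : continuous_on H a b -> a <= y <= b ->
  exists s, y <= s <= b /\ H y <= H s /\ forall t, s < t <= b -> H t < H y.
Proof.
  intros Hc Hy. set (S := fun t => y <= t <= b /\ H y <= H t).
  assert (HS : is_lub S (sup_of S)).
  { apply sup_of_lub; [exists b; intros t Ht; apply Ht | exists y; unfold S; lra]. }
  set (s := sup_of S) in *.
  assert (Hys : y <= s) by (apply (is_lub_ge S); [exact HS | unfold S; lra]).
  assert (Hsb : s <= b) by (apply (is_lub_le S); [exact HS | intros t Ht; apply Ht]).
  exists s. split; [lra | split].
  - apply Rnot_lt_le. intros Hlt.
    destruct (Hc s ltac:(lra) (H y - H s)) as [del [Hdel Hnear]]; [lra |].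
    destruct (is_lub_approx S s del HS Hdel) as [t [[Ht1 Ht2] Ht]].
    assert (t <= s) by (apply (is_lub_ge S); [exact HS | split; assumption]).
    specialize (Hnear t ltac:(lra) ltac:(apply Rabs_def1; lra)).
    apply Rabs_def2 in Hnear. lra.
  - intros t Ht. apply Rnot_le_lt. intros Hle.
    assert (t <= s) by (apply (is_lub_ge S); [exact HS | unfold S; lra]). lra.
Qed.

Definition shadowed (H : R -> R) (a b x : R) : Prop :=
  a < x < b /\ exists xi, x < xi <= b /\ H x < H xi.

Section RisingSun.
Variables (H : R -> R) (a b : R).
Hypothesis Hab : a <= b.
Hypothesis Hcont : continuous_on H a b.

Let shadow := shadowed H a b.

Lemma shadowed_open x : shadow x -> exists eta, 0 < eta /\ forall y, Rabs (y - x) < eta -> shadow y.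
Proof.
  intros [Hx [xi [Hxi HHxi]]].
  destruct (Hcont x ltac:(lra) (H xi - H x)) as [del [Hdel Hnear]]; [lra |].
  set (eta := Rmin del (Rmin (x - a) (xi - x))).
  pose proof (Rmin_l del (Rmin (x - a) (xi - x))).
  pose proof (Rmin_r del (Rmin (x - a) (xi - x))).
  pose proof (Rmin_l (x - a) (xi - x)). pose proof (Rmin_r (x - a) (xi - x)).
  exists eta. split; [unfold eta; repeat apply Rmin_glb_lt; lra |].
  intros y Hy. apply Rabs_def2 in Hy as Hy'.
  specialize (Hnear y ltac:(unfold eta in *; lra) ltac:(unfold eta in *; lra)).
  apply Rabs_def2 in Hnear.
  split; [unfold eta in *; lra |]. exists xi. split; [unfold eta in *; lra | lra].
Qed.

Definition linked (x y : R) : Prop := forall z, (x <= z <= y \/ y <= z <= x) -> shadow z.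

Lemma linked_sym x y : linked x y -> linked y x.
Proof. intros Hxy z Hz; apply Hxy; tauto. Qed.

Lemma linked_trans x y z : linked x y -> linked y z -> linked x z.
Proof.
  intros H1 H2 w Hw.
  destruct Hw; destruct (Rle_dec w y); destruct (Rle_dec x w);
    first [apply H1; left; lra | apply H1; right; lra
          | apply H2; left; lra | apply H2; right; lra].
Qed.

Lemma linked_shadowed x y : linked x y -> shadow y.
Proof. intros Hxy; apply Hxy; lra. Qed.

Lemma linked_near y : shadow y -> exists eta, 0 < eta /\ forall z, Rabs (z - y) < eta -> linked y z.
Proof.
  intros Hy. destruct (shadowed_open y Hy) as [eta [Heta Hball]].
  exists eta; split; [exact Heta |]. intros z Hz w Hw.
  apply Hball. apply Rabs_def2 in Hz. apply Rabs_def1; lra.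
Qed.

Definition comp_hi (x : R) : R := sup_of (linked x).
Definition comp_lo (x : R) : R := - sup_of (fun y => linked x (- y)).

Lemma comp_hi_lub x : shadow x -> is_lub (linked x) (comp_hi x).
Proof.
  intros Hx. apply sup_of_lub.
  - exists b. intros y Hy. apply linked_shadowed in Hy. destruct Hy; lra.
  - exists x. intros z Hz. replace z with x by lra. exact Hx.
Qed.

Lemma comp_lo_lub x : shadow x -> is_lub (fun y => linked x (- y)) (- comp_lo x).
Proof.
  intros Hx. unfold comp_lo. rewrite Ropp_involutive. apply sup_of_lub.
  - exists (- a). intros y Hy. apply linked_shadowed in Hy. destruct Hy; lra.
  - exists (- x). rewrite Ropp_involutive. intros z Hz. replace z with x by lra. exact Hx.
Qed.

Lemma linked_iff x y : shadow x -> (linked x y <-> comp_lo x < y < comp_hi x).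
Proof.
  intros Hx. pose proof (comp_hi_lub x Hx) as Hhi. pose proof (comp_lo_lub x Hx) as Hlo.
  split.
  - intros Hxy. destruct (linked_near y (linked_shadowed x y Hxy)) as [eta [Heta Hnear]].
    assert (Hr : linked x (y + eta / 2))
      by (apply linked_trans with y; [exact Hxy | apply Hnear; apply Rabs_def1; lra]).
    assert (Hl : linked x (- - (y - eta / 2))).
    { rewrite Ropp_involutive.
      apply linked_trans with y; [exact Hxy | apply Hnear; apply Rabs_def1; lra]. }
    apply (is_lub_ge _ _ _ Hhi) in Hr. apply (is_lub_ge _ _ _ Hlo) in Hl. lra.
  - intros Hy.
    destruct (is_lub_approx _ _ (comp_hi x - y) Hhi) as [y2 [Hy2 Hy2']]; [lra |].
    destruct (is_lub_approx _ _ (y - comp_lo x) Hlo) as [w [Hw Hw']]; [lra |].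
    intros z Hz. destruct (Rle_dec x z).
    + apply Hy2; lra.
    + apply Hw; lra.
Qed.

Lemma comp_bounds x : shadow x -> a <= comp_lo x /\ comp_lo x < x < comp_hi x /\ comp_hi x <= b.
Proof.
  intros Hx. pose proof (comp_hi_lub x Hx) as Hhi. pose proof (comp_lo_lub x Hx) as Hlo.
  assert (Hxx : linked x x) by (intros z Hz; replace z with x by lra; exact Hx).
  apply (linked_iff x x Hx) in Hxx.
  split; [| split; [exact Hxx |]].
  - enough (- comp_lo x <= - a) by lra.
    apply (is_lub_le _ _ _ Hlo). intros y Hy. apply linked_shadowed in Hy. destruct Hy; lra.
  - apply (is_lub_le _ _ _ Hhi). intros y Hy. apply linked_shadowed in Hy. destruct Hy; lra.
Qed.

Lemma comp_hi_not_shadowed x : shadow x -> ~ shadow (comp_hi x).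
Proof.
  intros Hx Hhi. pose proof (comp_bounds x Hx).
  assert (Hlink : linked x (comp_hi x)).
  { intros z Hz. destruct (Req_dec z (comp_hi x)) as [-> | Hne]; [exact Hhi |].
    apply (linked_shadowed x). apply linked_iff; [exact Hx | lra]. }
  apply linked_iff in Hlink; [lra | exact Hx].
Qed.

(* Otherwise the last point of [[y, b]] at height [H y] would either lie in the
   component, hence be shadowed, or shadow [comp_hi x]. *)
Lemma le_comp_hi x y : shadow x -> comp_lo x < y < comp_hi x -> H y <= H (comp_hi x).
Proof.
  intros Hx Hy. pose proof (comp_bounds x Hx) as Hb.
  destruct (last_superlevel_point H a b y Hcont ltac:(lra)) as [s [Hs [HHs Hafter]]].
  destruct (Rle_dec (H y) (H (comp_hi x))) as [Hle | Hgt]; [exact Hle | exfalso].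
  destruct (Rlt_le_dec s (comp_hi x)) as [Hlt | Hge].
  - assert (Hss : shadow s) by (apply (linked_shadowed x), linked_iff; [exact Hx | lra]).
    destruct Hss as [_ [xi [Hxi HHxi]]].
    specialize (Hafter xi ltac:(lra)). lra.
  - destruct (Req_dec s (comp_hi x)) as [Heq | Hne]; [rewrite Heq in HHs; lra |].
    apply (comp_hi_not_shadowed x Hx). split; [lra |]. exists s. split; lra.
Qed.

Lemma comp_lo_le_comp_hi x : shadow x -> H (comp_lo x) <= H (comp_hi x).
Proof.
  intros Hx. pose proof (comp_bounds x Hx).
  apply (continuous_on_le_from_right H a b (comp_lo x) (comp_hi x)); try tauto; [lra |].
  intros y Hy. apply le_comp_hi; assumption.
Qed.

(* Each component is enumerated by its first rational point; all other indices
   get the empty interval [(a, a)]. *)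
Definition first_in_comp (n : nat) : Prop :=
  shadow (qlo n) /\ forall m, (m < n)%nat -> ~ linked (qlo n) (qlo m).

Definition comp_lo_at (n : nat) : R :=
  if excluded_middle_informative (first_in_comp n) then comp_lo (qlo n) else a.
Definition comp_hi_at (n : nat) : R :=
  if excluded_middle_informative (first_in_comp n) then comp_hi (qlo n) else a.

Lemma first_in_comp_disjoint m m' : (m' < m)%nat -> first_in_comp m -> first_in_comp m' ->
  interval_disjoint (comp_lo (qlo m), comp_hi (qlo m)) (comp_lo (qlo m'), comp_hi (qlo m')).
Proof.
  intros Hlt [Hm Hfirst] [Hm' _]. unfold interval_disjoint; simpl.
  pose proof (comp_bounds _ Hm). pose proof (comp_bounds _ Hm').
  apply NNPP; intros Hn. apply (Hfirst m' Hlt).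
  assert (comp_lo (qlo m') < comp_hi (qlo m)) by (apply Rnot_le_lt; intros ?; apply Hn; tauto).
  assert (comp_lo (qlo m) < comp_hi (qlo m')) by (apply Rnot_le_lt; intros ?; apply Hn; tauto).
  set (z := (Rmax (comp_lo (qlo m)) (comp_lo (qlo m')) + Rmin (comp_hi (qlo m)) (comp_hi (qlo m'))) / 2).
  apply linked_trans with z; [| apply linked_sym]; apply linked_iff; try assumption.
  all: unfold z, Rmax, Rmin; repeat destruct Rle_dec; lra.
Qed.

Lemma rising_sun : exists al be : nat -> R,
  (forall n, a <= al n /\ al n <= be n /\ be n <= b) /\
  (forall n, H (al n) <= H (be n)) /\
  (forall x, shadow x -> exists n, al n < x < be n) /\
  (forall m m', m <> m' -> interval_disjoint (al m, be m) (al m', be m')).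
Proof.
  exists comp_lo_at, comp_hi_at. unfold comp_lo_at, comp_hi_at.
  split; [| split; [| split]].
  - intros n. destruct (excluded_middle_informative _) as [[Hn _] | _]; [| lra].
    pose proof (comp_bounds _ Hn). lra.
  - intros n. destruct (excluded_middle_informative _) as [[Hn _] | _]; [| lra].
    apply comp_lo_le_comp_hi; exact Hn.
  - intros x Hx. pose proof (comp_bounds x Hx).
    destruct (qinterval_dense (comp_lo x) (comp_hi x)) as [n0 [Hn0 Hn0']]; [lra |].
    pose proof (qlo_lt_qhi n0).
    destruct (nat_least (fun n => comp_lo x < qlo n < comp_hi x) n0) as [n [Hn Hleast]]; [lra |].
    assert (Hxn : linked x (qlo n)) by (apply linked_iff; assumption).
    assert (Hfirst : first_in_comp n).
    { split; [exact (linked_shadowed x _ Hxn) |].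
      intros m Hm Hnm. apply (Hleast m Hm), linked_iff; [exact Hx |].
      apply linked_trans with (qlo n); assumption. }
    exists n. destruct (excluded_middle_informative _); [| contradiction].
    apply linked_iff; [exact (proj1 Hfirst) | apply linked_sym; exact Hxn].
  - intros m m' Hne.
    destruct (excluded_middle_informative (first_in_comp m)) as [Hk | Hk];
    destruct (excluded_middle_informative (first_in_comp m')) as [Hk' | Hk'];
      try (unfold interval_disjoint; simpl; tauto).
    destruct (Nat.lt_gt_cases m m') as [[Hl | Hl] _]; [exact Hne | |].
    + pose proof (first_in_comp_disjoint m' m Hl Hk' Hk). unfold interval_disjoint in *; simpl in *; tauto.
    + apply first_in_comp_disjoint; assumption.
Qed.

End RisingSun.

(** * Differentiability of monotone functions *)

Definition often_right_gt (F : R -> R) (x s : R) : Prop :=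
  forall del, 0 < del -> exists h, 0 < h < del /\ F (x + h) - F x > s * h.
Definition often_left_gt (F : R -> R) (x s : R) : Prop :=
  forall del, 0 < del -> exists h, 0 < h < del /\ F x - F (x - h) > s * h.
Definition often_right_le (F : R -> R) (x r : R) : Prop :=
  forall del, 0 < del -> exists h, 0 < h < del /\ F (x + h) - F x <= r * h.
Definition often_left_le (F : R -> R) (x r : R) : Prop :=
  forall del, 0 < del -> exists h, 0 < h < del /\ F x - F (x - h) <= r * h.

Definition right_unbounded (F : R -> R) (x : R) : Prop := forall M, often_right_gt F x M.

Definition derivate_gap (F : R -> R) (c C x : R) : Prop :=
  (forall del, 0 < del -> exists h, 0 < h < del /\ F x - F (x - h) < c * h) /\
  often_right_gt F x C.

Definition reflect (F : R -> R) (y : R) : R := - F (- y).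

Lemma nondecreasing_on_subinterval F a b a' b' :
  nondecreasing_on F a b -> a <= a' -> b' <= b -> nondecreasing_on F a' b'.
Proof. intros HF H1 H2 x y ? ? ?; apply HF; lra. Qed.

Lemma nondecreasing_on_reflect F a b :
  nondecreasing_on F a b -> nondecreasing_on (reflect F) (- b) (- a).
Proof. intros HF x y ? ? ?. unfold reflect. enough (F (- y) <= F (- x)) by lra. apply HF; lra. Qed.

Lemma continuous_on_reflect F a b :
  continuous_on F a b -> continuous_on (reflect F) (- b) (- a).
Proof.
  intros HF t Ht eps Heps. destruct (continuous_on_opp_arg F a b HF t Ht eps Heps) as [d [Hd Hnear]].
  exists d; split; [exact Hd |]. intros s Hs Hst. unfold reflect.
  replace (- F (- s) - - F (- t)) with (- (F (- s) - F (- t))) by ring.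
  rewrite Rabs_Ropp. apply Hnear; assumption.
Qed.

(* [F - C x] rises across each component of its shadow, so [C] times the length
   of the component is at most the increase of [F] there. *)
Lemma shadowed_slope_cover_le F a b C :
  a <= b -> nondecreasing_on F a b -> continuous_on F a b -> 0 < C ->
  cover_le (shadowed (fun x => F x - C * x) a b) ((F b - F a) / C).
Proof.
  intros Hab Hmono Hcont HC.
  destruct (rising_sun (fun x => F x - C * x) a b Hab (continuous_on_sub_linear F a b C Hcont))
    as [al [be [Hbnd [Hinc [Hcov Hdisj]]]]].
  exists al, be. split; [intros n; specialize (Hbnd n); lra |]. split; [exact Hcov |].
  intros N. apply Rmult_le_reg_l with C; [exact HC |].
  replace (C * ((F b - F a) / C)) with (F b - F a) by (field; lra).
  eapply Rle_trans; [| exact (sum_increments_le F a b al be N Hmono Hbnd Hdisj)].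
  rewrite scal_sum. apply sum_Rle. intros k _. specialize (Hinc k). lra.
Qed.

Lemma right_unbounded_null F a b : a <= b -> nondecreasing_on F a b -> continuous_on F a b ->
  null_set (fun x => a < x < b /\ right_unbounded F x).
Proof.
  intros Hab Hmono Hcont. apply null_set_cover_le. intros eps Heps.
  assert (HF : F a <= F b) by (apply Hmono; lra).
  set (M := (F b - F a + 1) / eps).
  assert (HM : 0 < M) by (apply Rdiv_lt_0_compat; lra).
  apply cover_le_mono with (shadowed (fun x => F x - M * x) a b) ((F b - F a) / M).
  - intros x [Hx Hinf]. destruct (Hinf M (b - x)) as [h [Hh Hh']]; [lra |].
    split; [exact Hx |]. exists (x + h). split; lra.
  - apply Rdiv_le_iff; [exact HM |]. unfold M.
    replace (eps * ((F b - F a + 1) / eps)) with (F b - F a + 1) by (field; lra). lra.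
  - apply shadowed_slope_cover_le; assumption.
Qed.

(* The rising sun lemma for the reflection of [F - c x]: it collects the points
   where some left difference quotient is below [c]. *)
Lemma rising_sun_left F c a b : a <= b -> continuous_on F a b ->
  exists p q : nat -> R,
    (forall n, a <= p n /\ p n <= q n /\ q n <= b) /\
    (forall n, F (q n) - F (p n) <= c * (q n - p n)) /\
    (forall x h, a < x < b -> 0 < h <= x - a -> F x - F (x - h) < c * h ->
       exists n, p n < x < q n) /\
    (forall N, sum_f_R0 (fun k => q k - p k) N <= b - a).
Proof.
  intros Hab Hcont.
  set (G := fun y => F (- y) - c * - y).
  assert (HG : continuous_on G (- b) (- a))
    by exact (continuous_on_opp_arg _ a b (continuous_on_sub_linear F a b c Hcont)).
  destruct (rising_sun G (- b) (- a) ltac:(lra) HG) as [u [v [Hbnd [Hinc [Hcov Hdisj]]]]].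
  exists (fun k => - v k), (fun k => - u k). split; [| split; [| split]].
  - intros n; specialize (Hbnd n); lra.
  - intros n; specialize (Hinc n). unfold G in Hinc. lra.
  - intros x h Hx Hh Hq.
    destruct (Hcov (- x)) as [n Hn]; [| exists n; lra].
    split; [lra |]. exists (- x + h). split; [lra |].
    unfold G. replace (- (- x + h)) with (x - h) by ring. rewrite Ropp_involutive. lra.
  - intros N. replace (b - a) with (- a - - b) by ring.
    eapply Rle_trans; [| apply (sum_increments_le (fun z => z) (- b) (- a) u v N)];
      [right; apply sum_eq; intros; ring | intros ? ? ? ? ?; lra | exact Hbnd | exact Hdisj].
Qed.

Lemma derivate_gap_cover_le F a b c C :
  a <= b -> nondecreasing_on F a b -> continuous_on F a b -> 0 < c < C ->
  cover_le (fun x => derivate_gap F c C x /\ a < x < b) (c / C * (b - a)).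
Proof.
  intros Hab Hmono Hcont HcC.
  assert (HcC0 : 0 <= c / C) by (left; apply Rdiv_lt_0_compat; lra).
  destruct (rising_sun_left F c a b Hab Hcont) as [p [q [Hpq [Hinc [Hcov Hsum]]]]].
  apply cover_le_mono with (fun x => exists k, derivate_gap F c C x /\ p k < x < q k)
    (c / C * (b - a)); [| lra |].
  - intros x [[Hleft Hright] Hx]. destruct (Hleft (x - a)) as [h [Hh Hh']]; [lra |].
    destruct (Hcov x h Hx ltac:(lra) Hh') as [k Hk]. exists k. split; [split |]; assumption.
  - apply cover_le_union with (S := fun k => c / C * (q k - p k)).
    + intros k. specialize (Hpq k).
      apply cover_le_mono with (shadowed (fun x => F x - C * x) (p k) (q k)) ((F (q k) - F (p k)) / C).
      * intros x [[_ Hright] Hx]. destruct (Hright (q k - x)) as [h [Hh Hh']]; [lra |].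
        split; [exact Hx |]. exists (x + h). split; lra.
      * apply Rdiv_le_iff; [lra |].
        replace (c / C * (q k - p k) * C) with (c * (q k - p k)) by (field; lra). apply Hinc.
      * apply shadowed_slope_cover_le; [lra | eapply nondecreasing_on_subinterval | eapply continuous_on_subinterval | lra];
          eassumption || lra.
    + intros K. rewrite <- (sum_eq (fun k => (q k - p k) * (c / C))) by (intros; ring).
      rewrite <- scal_sum. apply Rmult_le_compat_l; [exact HcC0 | apply Hsum].
Qed.

Lemma derivate_gap_cover_shrink F a b c C S :
  nondecreasing_on F a b -> continuous_on F a b -> 0 < c < C ->
  cover_le (fun x => derivate_gap F c C x /\ a < x < b) S ->
  cover_le (fun x => derivate_gap F c C x /\ a < x < b) (c / C * S).
Proof.
  intros Hmono Hcont HcC [u [v [Huv [Hcov Hsum]]]].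
  assert (HcC0 : 0 <= c / C) by (left; apply Rdiv_lt_0_compat; lra).
  apply cover_le_mono with
    (fun x => exists k, derivate_gap F c C x /\ Rmax a (u k) < x < Rmin b (v k)) (c / C * S); [| lra |].
  - intros x [Hg Hx]. destruct (Hcov x (conj Hg Hx)) as [k Hk]. exists k.
    split; [exact Hg |]. split; [apply Rmax_lub_lt | apply Rmin_glb_lt]; lra.
  - apply cover_le_union with (S := fun k => c / C * (v k - u k)).
    + intros k. pose proof (Rmax_l a (u k)). pose proof (Rmax_r a (u k)).
      pose proof (Rmin_l b (v k)). pose proof (Rmin_r b (v k)). specialize (Huv k).
      destruct (Rle_lt_dec (Rmax a (u k)) (Rmin b (v k))) as [Hle | Hlt].
      * eapply cover_le_mono; [intros x Hx; exact Hx | |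
          apply derivate_gap_cover_le; [exact Hle | eapply nondecreasing_on_subinterval
                                       | eapply continuous_on_subinterval | exact HcC]; eassumption].
        apply Rmult_le_compat_l; [exact HcC0 | lra].
      * apply cover_le_empty; [intros x [_ Hx]; lra | apply Rmult_le_pos; lra].
    + intros K. rewrite <- (sum_eq (fun k => (v k - u k) * (c / C))) by (intros; ring).
      rewrite <- scal_sum. apply Rmult_le_compat_l; [exact HcC0 | apply Hsum].
Qed.

Lemma derivate_gap_null F a b c C :
  a <= b -> nondecreasing_on F a b -> continuous_on F a b -> c < C ->
  null_set (fun x => derivate_gap F c C x /\ a < x < b).
Proof.
  intros Hab Hmono Hcont HcC. apply null_set_cover_le. intros eps Heps.
  destruct (Rle_lt_dec c 0) as [Hc0 | Hc0].
  { apply cover_le_empty; [| lra]. intros x [[Hleft _] Hx].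
    destruct (Hleft (x - a)) as [h [Hh Hh']]; [lra |].
    assert (F (x - h) <= F x) by (apply Hmono; lra). nra. }
  set (rho := c / C).
  assert (Hrho : 0 < rho < 1).
  { unfold rho. split; [apply Rdiv_lt_0_compat; lra |].
    apply Rmult_lt_reg_r with C; [lra |]. replace (c / C * C) with c by (field; lra). lra. }
  assert (Hn : forall n, cover_le (fun x => derivate_gap F c C x /\ a < x < b) (rho ^ n * (b - a))).
  { induction n as [|n IH].
    - simpl. rewrite Rmult_1_l. apply cover_le_interval; [exact Hab | intros x Hx; apply Hx].
    - simpl. rewrite Rmult_assoc. apply derivate_gap_cover_shrink; [..| lra | exact IH]; assumption. }
  destruct (Req_dec a b) as [<- | Hne].
  { apply cover_le_empty; [intros x [_ Hx]; lra | lra]. }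
  destruct (pow_lt_1_zero rho ltac:(rewrite Rabs_pos_eq; lra) (eps / (b - a))) as [N HN].
  { apply Rdiv_lt_0_compat; lra. }
  specialize (HN N (Nat.le_refl _)). rewrite Rabs_pos_eq in HN by (apply pow_le; lra).
  apply cover_le_mono with (fun x => derivate_gap F c C x /\ a < x < b) (rho ^ N * (b - a));
    [auto | | apply Hn].
  apply Rlt_div_iff in HN; lra.
Qed.

Definition rational_gap (F : R -> R) (x : R) : Prop :=
  exists n, derivate_gap F (qlo n) (qhi n) x \/ derivate_gap (reflect F) (qlo n) (qhi n) (- x).

Definition slope (F : R -> R) (x h : R) : R := (F (x + h) - F x) / h.

Section DiniDerivates.
Variables (F : R -> R) (x : R).

Lemma rational_gap_left_right r s :
  r < s -> often_left_le F x r -> often_right_gt F x s -> rational_gap F x.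
Proof.
  intros Hrs Hl Hr. destruct (qinterval_dense r s Hrs) as [n [H1 H2]]. pose proof (qlo_lt_qhi n).
  exists n; left. split.
  - intros del Hd. destruct (Hl del Hd) as [h [Hh Hh']]. exists h; split; [exact Hh | nra].
  - intros del Hd. destruct (Hr del Hd) as [h [Hh Hh']]. exists h; split; [exact Hh | nra].
Qed.

Lemma rational_gap_right_left r s :
  r < s -> often_right_le F x r -> often_left_gt F x s -> rational_gap F x.
Proof.
  intros Hrs Hr Hl. destruct (qinterval_dense r s Hrs) as [n [H1 H2]]. pose proof (qlo_lt_qhi n).
  exists n; right. unfold reflect. split.
  - intros del Hd. destruct (Hr del Hd) as [h [Hh Hh']]. exists h; split; [exact Hh |].
    replace (- (- x - h)) with (x + h) by ring. rewrite Ropp_involutive. nra.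
  - intros del Hd. destruct (Hl del Hd) as [h [Hh Hh']]. exists h; split; [exact Hh |].
    replace (- (- x + h)) with (x - h) by ring. rewrite Ropp_involutive. nra.
Qed.

Lemma often_left_gt_of_not_le t t' : ~ often_left_le F x t -> t' < t -> often_left_gt F x t'.
Proof.
  intros Hn Ht del Hd. apply not_all_ex_not in Hn as [d Hn]. apply imply_to_and in Hn as [Hd0 Hn].
  assert (0 < Rmin del d) by (apply Rmin_glb_lt; assumption).
  pose proof (Rmin_l del d). pose proof (Rmin_r del d).
  exists (Rmin del d / 2). split; [lra |]. apply Rnot_le_lt. intros Hle. apply Hn.
  exists (Rmin del d / 2). split; [lra | nra].
Qed.

Lemma often_right_le_of_not_gt t : ~ often_right_gt F x t -> often_right_le F x t.
Proof.
  intros Hn del Hd. apply not_all_ex_not in Hn as [d Hn]. apply imply_to_and in Hn as [Hd0 Hn].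
  assert (0 < Rmin del d) by (apply Rmin_glb_lt; assumption).
  pose proof (Rmin_l del d). pose proof (Rmin_r del d).
  exists (Rmin del d / 2). split; [lra |]. apply Rnot_lt_le. intros Hgt. apply Hn.
  exists (Rmin del d / 2). split; [lra | exact Hgt].
Qed.

(* Two one-sided quotients on the same side are separated through the other
   side at the midpoint [t]. *)
Lemma rational_gap_of_low_high r s : r < s ->
  often_right_le F x r \/ often_left_le F x r ->
  often_right_gt F x s \/ often_left_gt F x s -> rational_gap F x.
Proof.
  intros Hrs [HlowR | HlowL] [HhighR | HhighL]; set (t := (r + s) / 2).
  - destruct (classic (often_left_le F x t)) as [Ht | Ht].
    + apply (rational_gap_left_right t s); [unfold t; lra | exact Ht | exact HhighR].
    + apply (rational_gap_right_left r ((r + t) / 2)); [unfold t; lra | exact HlowR |].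
      apply (often_left_gt_of_not_le t); [exact Ht | unfold t; lra].
  - apply (rational_gap_right_left r s); assumption.
  - apply (rational_gap_left_right r s); assumption.
  - destruct (classic (often_right_gt F x t)) as [Ht | Ht].
    + apply (rational_gap_left_right r t); [unfold t; lra | exact HlowL | exact Ht].
    + apply (rational_gap_right_left t s); [unfold t; lra | | exact HhighL].
      apply often_right_le_of_not_gt; exact Ht.
Qed.

Lemma often_le_of_slope r :
  (forall del, 0 < del -> exists h, 0 < Rabs h < del /\ slope F x h <= r) ->
  often_right_le F x r \/ often_left_le F x r.
Proof.
  intros H. apply NNPP. intros Hn. apply not_or_and in Hn as [HR HL].
  apply not_all_ex_not in HR as [d1 HR]. apply imply_to_and in HR as [Hd1 HR].
  apply not_all_ex_not in HL as [d2 HL]. apply imply_to_and in HL as [Hd2 HL].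
  destruct (H (Rmin d1 d2)) as [h [Hh Hs]]; [apply Rmin_glb_lt; assumption |].
  pose proof (Rmin_l d1 d2). pose proof (Rmin_r d1 d2). unfold slope in Hs.
  destruct (Rlt_le_dec 0 h) as [Hp | Hp].
  - rewrite Rabs_pos_eq in Hh by lra. apply HR. exists h. split; [lra |].
    apply Rdiv_le_iff in Hs; lra.
  - rewrite Rabs_left1 in Hh by lra. apply HL. exists (- h). split; [lra |].
    replace (x - - h) with (x + h) by ring.
    replace ((F (x + h) - F x) / h) with ((F x - F (x + h)) / - h) in Hs by (field; lra).
    apply Rdiv_le_iff in Hs; lra.
Qed.

Lemma often_gt_of_slope s :
  (forall del, 0 < del -> exists h, 0 < Rabs h < del /\ slope F x h > s) ->
  often_right_gt F x s \/ often_left_gt F x s.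
Proof.
  intros H. apply NNPP. intros Hn. apply not_or_and in Hn as [HR HL].
  apply not_all_ex_not in HR as [d1 HR]. apply imply_to_and in HR as [Hd1 HR].
  apply not_all_ex_not in HL as [d2 HL]. apply imply_to_and in HL as [Hd2 HL].
  destruct (H (Rmin d1 d2)) as [h [Hh Hs]]; [apply Rmin_glb_lt; assumption |].
  pose proof (Rmin_l d1 d2). pose proof (Rmin_r d1 d2). unfold slope in Hs.
  destruct (Rlt_le_dec 0 h) as [Hp | Hp].
  - rewrite Rabs_pos_eq in Hh by lra. apply HR. exists h. split; [lra |].
    apply Rlt_div_iff in Hs; lra.
  - rewrite Rabs_left1 in Hh by lra. apply HL. exists (- h). split; [lra |].
    replace (x - - h) with (x + h) by ring.
    replace ((F (x + h) - F x) / h) with ((F x - F (x + h)) / - h) in Hs by (field; lra).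
    apply Rlt_div_iff in Hs; lra.
Qed.

(* The candidate derivative is the upper limit [L] of the slopes; without a
   rational gap the lower limit cannot be smaller. *)
Lemma derivable_of_no_rational_gap M del0 : 0 < del0 ->
  (forall h, 0 < Rabs h < del0 -> 0 <= slope F x h <= M) -> ~ rational_gap F x ->
  exists l, derivable_pt_lim F x l.
Proof.
  intros Hd0 Hbnd Hnogap.
  set (S := fun y => forall del, 0 < del -> exists h, 0 < Rabs h < del /\ slope F x h > y).
  assert (HS : is_lub S (sup_of S)).
  { apply sup_of_lub.
    - exists M. intros y Hy. destruct (Hy del0 Hd0) as [h [Hh Hh']].
      specialize (Hbnd h ltac:(lra)). lra.
    - exists (-1). intros del Hd. set (h := Rmin del del0 / 2).
      assert (0 < Rmin del del0) by (apply Rmin_glb_lt; assumption).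
      pose proof (Rmin_l del del0). pose proof (Rmin_r del del0).
      assert (Hh : 0 < Rabs h < Rmin del del0) by (unfold h; rewrite Rabs_pos_eq; lra).
      exists h. specialize (Hbnd h ltac:(lra)). split; lra. }
  set (L := sup_of S) in *. exists L.
  assert (Hup : forall eps, 0 < eps -> exists del, 0 < del /\
            forall h, 0 < Rabs h < del -> slope F x h < L + eps).
  { intros eps Heps. apply NNPP. intros Hn.
    enough (HL : S (L + eps / 2)) by (apply (is_lub_ge _ _ _ HS) in HL; lra).
    intros del Hd. apply NNPP; intros Hn2. apply Hn. exists del; split; [exact Hd |].
    intros h Hh. apply Rnot_le_lt. intros Hle. apply Hn2. exists h. split; [exact Hh | lra]. }
  assert (Hlow : forall eps, 0 < eps -> exists del, 0 < del /\
             forall h, 0 < Rabs h < del -> L - eps < slope F x h).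
  { intros eps Heps. apply NNPP. intros Hn.
    destruct (is_lub_approx _ _ (eps / 2) HS) as [y [Hy Hy']]; [lra |].
    apply Hnogap, (rational_gap_of_low_high (L - eps) y); [lra | | apply often_gt_of_slope, Hy].
    apply often_le_of_slope. intros del Hd. apply NNPP; intros Hn2. apply Hn.
    exists del; split; [exact Hd |]. intros h Hh. apply Rnot_le_lt. intros Hle.
    apply Hn2. exists h. split; assumption. }
  intros eps Heps.
  destruct (Hup eps Heps) as [d1 [Hd1 H1]]. destruct (Hlow eps Heps) as [d2 [Hd2 H2]].
  assert (Hm : 0 < Rmin d1 d2) by (apply Rmin_glb_lt; assumption).
  exists (mkposreal _ Hm). intros h Hh Hhd; simpl in Hhd.
  pose proof (Rmin_l d1 d2). pose proof (Rmin_r d1 d2). pose proof (Rabs_pos_lt h Hh).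
  specialize (H1 h ltac:(lra)). specialize (H2 h ltac:(lra)). unfold slope in *.
  apply Rabs_def1; lra.
Qed.

End DiniDerivates.

Lemma not_right_unbounded F x : ~ right_unbounded F x ->
  exists M d, 0 < d /\ forall h, 0 < h < d -> F (x + h) - F x <= M * h.
Proof.
  intros Hn. apply not_all_ex_not in Hn as [M Hn]. apply not_all_ex_not in Hn as [d Hn].
  apply imply_to_and in Hn as [Hd Hn]. exists M, d; split; [exact Hd |].
  intros h Hh. apply Rnot_lt_le. intros Hgt. apply Hn. exists h; split; [exact Hh | lra].
Qed.

Lemma derivable_at_regular_point F a b x : a < x < b -> nondecreasing_on F a b ->
  ~ right_unbounded F x -> ~ right_unbounded (reflect F) (- x) -> ~ rational_gap F x ->
  exists l, derivable_pt_lim F x l.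
Proof.
  intros Hx Hmono HR HL Hnogap.
  destruct (not_right_unbounded F x HR) as [M1 [d1 [Hd1 HM1]]].
  destruct (not_right_unbounded (reflect F) (- x) HL) as [M2 [d2 [Hd2 HM2]]].
  pose proof (Rmin_l (Rmin d1 d2) (Rmin (x - a) (b - x))).
  pose proof (Rmin_r (Rmin d1 d2) (Rmin (x - a) (b - x))).
  pose proof (Rmin_l d1 d2). pose proof (Rmin_r d1 d2).
  pose proof (Rmin_l (x - a) (b - x)). pose proof (Rmin_r (x - a) (b - x)).
  set (d0 := Rmin (Rmin d1 d2) (Rmin (x - a) (b - x))) in *.
  assert (Hd0 : 0 < d0) by (unfold d0; repeat apply Rmin_glb_lt; lra).
  pose proof (Rmax_l M1 M2). pose proof (Rmax_r M1 M2).
  apply (derivable_of_no_rational_gap F x (Rmax M1 M2) d0 Hd0); [| exact Hnogap].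
  intros h Hh. unfold slope.
  destruct (Rlt_le_dec 0 h) as [Hp | Hp].
  - rewrite Rabs_pos_eq in Hh by lra.
    assert (F x <= F (x + h)) by (apply Hmono; lra).
    specialize (HM1 h ltac:(lra)).
    split; [unfold Rdiv; apply Rmult_le_pos; [lra | left; apply Rinv_0_lt_compat; lra]
           | apply Rdiv_le_iff; nra].
  - rewrite Rabs_left1 in Hh by lra.
    assert (F (x + h) <= F x) by (apply Hmono; lra).
    specialize (HM2 (- h) ltac:(lra)). unfold reflect in HM2.
    replace (- (- x + - h)) with (x + h) in HM2 by ring. rewrite Ropp_involutive in HM2.
    replace ((F (x + h) - F x) / h) with ((F x - F (x + h)) / - h) by (field; lra).
    split; [unfold Rdiv; apply Rmult_le_pos; [lra | left; apply Rinv_0_lt_compat; lra]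
           | apply Rdiv_le_iff; nra].
Qed.

Theorem nondecreasing_derivable_ae F a b : a <= b -> nondecreasing_on F a b -> continuous_on F a b ->
  exists N, null_set N /\ forall x, a < x < b -> ~ N x -> exists l, derivable_pt_lim F x l.
Proof.
  intros Hab Hmono Hcont.
  pose proof (nondecreasing_on_reflect F a b Hmono) as Hmono'.
  pose proof (continuous_on_reflect F a b Hcont) as Hcont'.
  set (gap := fun n x => (derivate_gap F (qlo n) (qhi n) x /\ a < x < b) \/
     (derivate_gap (reflect F) (qlo n) (qhi n) (- x) /\ - b < - x < - a)).
  exists (fun x => (a < x < b /\ right_unbounded F x) \/
     (- b < - x < - a /\ right_unbounded (reflect F) (- x)) \/ exists n, gap n x).
  split.
  - apply null_set_or; [apply right_unbounded_null; assumption |].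
    apply null_set_or.
    + apply (null_set_opp (fun y => - b < y < - a /\ right_unbounded (reflect F) y)).
      apply right_unbounded_null; [lra | assumption | assumption].
    + apply null_set_union. intros n. apply null_set_or.
      * apply derivate_gap_null; [assumption | assumption | assumption | apply qlo_lt_qhi].
      * apply (null_set_opp (fun y => derivate_gap (reflect F) (qlo n) (qhi n) y /\ - b < y < - a)).
        apply derivate_gap_null; [lra | assumption | assumption | apply qlo_lt_qhi].
  - intros x Hx HN. apply (derivable_at_regular_point F a b x Hx Hmono).
    + intros HR; apply HN; left; split; assumption.
    + intros HL; apply HN; right; left; split; [lra | exact HL].
    + intros [n Hn]. apply HN; right; right; exists n.
      destruct Hn; [left | right]; split; (assumption || lra).
Qed.

(** * Absolutely continuous functions *)

Lemma nonoverlapping_le lo hi l : nonoverlapping lo hi l -> lo <= hi.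
Proof.
  revert lo; induction l as [|[a b] l IH]; simpl; intros lo H; [exact H |].
  destruct H as [H1 [H2 H3]]. apply IH in H3. lra.
Qed.

Lemma nonoverlapping_widen lo hi lo' hi' l :
  nonoverlapping lo hi l -> lo' <= lo -> hi <= hi' -> nonoverlapping lo' hi' l.
Proof.
  revert lo lo'; induction l as [|[a b] l IH]; simpl; intros lo lo' H H1 H2; [lra |].
  destruct H as [H3 [H4 H5]]. split; [lra |]. split; [exact H4 |]. apply (IH b b); lra || assumption.
Qed.

Lemma nonoverlapping_app lo m hi l1 l2 :
  nonoverlapping lo m l1 -> nonoverlapping m hi l2 -> nonoverlapping lo hi (l1 ++ l2).
Proof.
  revert lo; induction l1 as [|[a b] l IH]; simpl; intros lo H1 H2.
  - eapply nonoverlapping_widen; [exact H2 | lra | lra].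
  - destruct H1 as [H3 [H4 H5]]. repeat split; auto.
Qed.

Lemma total_variation_on_app u l1 l2 :
  total_variation_on u (l1 ++ l2) = total_variation_on u l1 + total_variation_on u l2.
Proof. induction l1 as [|[a b] l IH]; simpl; [lra | rewrite IH; lra]. Qed.

Lemma total_length_le lo hi l : nonoverlapping lo hi l -> total_length l <= hi - lo.
Proof.
  revert lo; induction l as [|[a b] l IH]; simpl; intros lo H; [lra |].
  destruct H as [H1 [H2 H3]]. apply IH in H3. lra.
Qed.

Lemma nonoverlapping_split u lo m hi l : nonoverlapping lo hi l -> lo <= m <= hi ->
  exists l1 l2, nonoverlapping lo m l1 /\ nonoverlapping m hi l2 /\
    total_variation_on u l <= total_variation_on u l1 + total_variation_on u l2.
Proof.
  revert lo; induction l as [|[a b] l IH]; simpl; intros lo H Hm.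
  - exists [], []; simpl; lra.
  - destruct H as [H1 [H2 H3]].
    destruct (Rle_dec b m) as [Hbm | Hbm].
    + destruct (IH b H3 ltac:(lra)) as [l1 [l2 [K1 [K2 K3]]]].
      exists ((a, b) :: l1), l2. simpl. repeat split; auto; lra.
    + destruct (Rle_dec m a) as [Hma | Hma].
      * exists [], ((a, b) :: l). simpl. repeat split; auto; lra.
      * exists [(a, m)], ((m, b) :: l). simpl. repeat split; auto; try lra.
        pose proof (Rabs_triang (u m - u a) (u b - u m)).
        replace (u m - u a + (u b - u m)) with (u b - u a) in * by ring. lra.
Qed.

Lemma continuous_on_minus F G a b :
  continuous_on F a b -> continuous_on G a b -> continuous_on (fun t => F t - G t) a b.
Proof.
  intros HF HG t Ht eps He.
  destruct (HF t Ht (eps / 2)) as [d1 [Hd1 H1]]; [lra |].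
  destruct (HG t Ht (eps / 2)) as [d2 [Hd2 H2]]; [lra |].
  exists (Rmin d1 d2); split; [apply Rmin_glb_lt; assumption |]. intros s Hs Hst.
  pose proof (Rmin_l d1 d2). pose proof (Rmin_r d1 d2).
  specialize (H1 s Hs ltac:(lra)). specialize (H2 s Hs ltac:(lra)).
  replace (F s - G s - (F t - G t)) with ((F s - F t) - (G s - G t)) by ring.
  eapply Rle_lt_trans; [apply Rabs_triang |]. rewrite Rabs_Ropp. lra.
Qed.

Lemma W11_continuous_on T u : W11 T u -> continuous_on u 0 T.
Proof.
  intros Hu t Ht eps He. destruct (Hu eps He) as [d [Hd Hac]]. exists d; split; [exact Hd |].
  intros s Hs Hst. destruct (Rle_dec t s).
  - rewrite Rabs_pos_eq in Hst by lra.
    specialize (Hac [(t, s)]). simpl in Hac. enough (Rabs (u s - u t) + 0 < eps) by lra.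
    apply Hac; simpl; repeat split; lra.
  - rewrite Rabs_left in Hst by lra. rewrite Rabs_minus_sym.
    specialize (Hac [(s, t)]). simpl in Hac. enough (Rabs (u t - u s) + 0 < eps) by lra.
    apply Hac; simpl; repeat split; lra.
Qed.

Section Variation.
Variables (T : R) (u : R -> R).
Hypothesis HT : 0 < T.
Hypothesis Hu : W11 T u.

(* [0,T] is cut into [n] pieces shorter than the modulus of absolute continuity for [1]. *)
Lemma W11_bounded_variation :
  exists B, forall l, nonoverlapping 0 T l -> total_variation_on u l <= B.
Proof.
  destruct (Hu 1 Rlt_0_1) as [d [Hd Hac]].
  destruct (INR_archimed d T Hd) as [n Hn].
  assert (Hn0 : 0 < INR n) by (destruct n; [simpl in Hn; lra | apply lt_0_INR; lia]).
  set (h := T / INR n).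
  assert (Hh : 0 < h) by (apply Rdiv_lt_0_compat; lra).
  assert (Hhd : h < d) by (unfold h; apply Rmult_lt_reg_r with (INR n); [lra |];
                           replace (T / INR n * INR n) with T by (field; lra); lra).
  assert (HnT : INR n * h = T) by (unfold h; field; lra).
  assert (Hk : forall k, (k <= n)%nat -> forall l, nonoverlapping 0 (INR k * h) l ->
                total_variation_on u l <= INR k + 1).
  { induction k as [|k IH]; intros Hk l Hl.
    - simpl in Hl |- *. rewrite Rmult_0_l in Hl.
      enough (total_variation_on u l < 1) by lra.
      apply Hac; [eapply nonoverlapping_widen; [exact Hl | lra | lra] |].
      apply total_length_le in Hl. lra.
    - assert (HkS : INR (S k) * h <= T)
        by (rewrite <- HnT; apply Rmult_le_compat_r; [lra | apply le_INR; exact Hk]).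
      rewrite S_INR in *.
      assert (Hk0 : 0 <= INR k * h) by (apply Rmult_le_pos; [apply pos_INR | lra]).
      destruct (nonoverlapping_split u 0 (INR k * h) ((INR k + 1) * h) l Hl ltac:(lra))
        as [l1 [l2 [K1 [K2 K3]]]].
      specialize (IH ltac:(lia) l1 K1).
      assert (total_variation_on u l2 < 1).
      { apply Hac; [eapply nonoverlapping_widen; [exact K2 | lra | lra] |].
        apply total_length_le in K2. lra. }
      lra. }
  exists (INR n + 1). intros l Hl. apply Hk; [lia | rewrite HnT; exact Hl].
Qed.

Lemma W11_bounded : exists B, forall t, 0 <= t <= T -> Rabs (u t) <= B.
Proof.
  destruct W11_bounded_variation as [B HB]. exists (Rabs (u 0) + B). intros t Ht.
  specialize (HB [(0, t)]). simpl in HB.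
  assert (Rabs (u t - u 0) + 0 <= B) by (apply HB; repeat split; lra).
  pose proof (Rabs_triang (u t - u 0) (u 0)).
  replace (u t - u 0 + u 0) with (u t) in * by ring. lra.
Qed.

Definition variation_set (x : R) (s : R) : Prop :=
  exists l, nonoverlapping 0 x l /\ s = total_variation_on u l.

Definition variation (x : R) : R := sup_of (variation_set x).

Lemma variation_lub x : 0 <= x <= T -> is_lub (variation_set x) (variation x).
Proof.
  intros Hx. destruct W11_bounded_variation as [B HB]. apply sup_of_lub.
  - exists B. intros s [l [Hl ->]]. apply HB. eapply nonoverlapping_widen; [exact Hl | lra | lra].
  - exists 0, []. simpl; split; lra.
Qed.

Lemma variation_increment x y : 0 <= x -> x <= y -> y <= T ->
  variation x + Rabs (u y - u x) <= variation y.
Proof.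
  intros H1 H2 H3.
  enough (variation x <= variation y - Rabs (u y - u x)) by lra.
  apply (is_lub_le _ _ _ (variation_lub x ltac:(lra))). intros s [l [Hl ->]].
  assert (Happ : total_variation_on u (l ++ [(x, y)]) <= variation y).
  { apply (is_lub_ge _ _ _ (variation_lub y ltac:(lra))). exists (l ++ [(x, y)]).
    split; [eapply nonoverlapping_app; [exact Hl | simpl; lra] | reflexivity]. }
  rewrite total_variation_on_app in Happ. simpl in Happ. lra.
Qed.

Lemma variation_nondecreasing : nondecreasing_on variation 0 T.
Proof.
  intros x y H1 H2 H3. pose proof (variation_increment x y H1 H2 H3).
  pose proof (Rabs_pos (u y - u x)). lra.
Qed.

Lemma variation_sub_nondecreasing : nondecreasing_on (fun t => variation t - u t) 0 T.
Proof.
  intros x y H1 H2 H3. pose proof (variation_increment x y H1 H2 H3).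
  pose proof (Rle_abs (u y - u x)). lra.
Qed.

Lemma continuous_on_variation : continuous_on variation 0 T.
Proof.
  intros t Ht eps He. destruct (Hu (eps / 2)) as [d [Hd Hac]]; [lra |].
  assert (Hstep : forall x y, 0 <= x -> x <= y -> y <= T -> y - x < d ->
            variation y <= variation x + eps / 2).
  { intros x y H1 H2 H3 H4.
    apply (is_lub_le _ _ _ (variation_lub y ltac:(lra))). intros s [l [Hl ->]].
    destruct (nonoverlapping_split u 0 x y l Hl ltac:(lra)) as [l1 [l2 [K1 [K2 K3]]]].
    assert (total_variation_on u l1 <= variation x)
      by (apply (is_lub_ge _ _ _ (variation_lub x ltac:(lra))); exists l1; split; auto).
    assert (total_variation_on u l2 < eps / 2).
    { apply Hac; [eapply nonoverlapping_widen; [exact K2 | lra | lra] |].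
      apply total_length_le in K2; lra. }
    lra. }
  exists d; split; [exact Hd |]. intros s Hs Hst. apply Rabs_def1.
  - destruct (Rle_dec t s).
    + rewrite Rabs_pos_eq in Hst by lra. specialize (Hstep t s ltac:(lra) ltac:(lra) ltac:(lra) ltac:(lra)). lra.
    + pose proof (variation_nondecreasing s t ltac:(lra) ltac:(lra) ltac:(lra)). lra.
  - destruct (Rle_dec t s).
    + pose proof (variation_nondecreasing t s ltac:(lra) ltac:(lra) ltac:(lra)). lra.
    + rewrite Rabs_left in Hst by lra. specialize (Hstep s t ltac:(lra) ltac:(lra) ltac:(lra) ltac:(lra)). lra.
Qed.

(* Jordan decomposition: [u = variation - (variation - u)]. *)
Theorem W11_derivable_ae : ae_on T (fun t => exists l, derivable_pt_lim u t l).
Proof.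
  destruct (nondecreasing_derivable_ae variation 0 T ltac:(lra)
              variation_nondecreasing continuous_on_variation) as [N1 [HN1 H1]].
  destruct (nondecreasing_derivable_ae (fun t => variation t - u t) 0 T ltac:(lra)
              variation_sub_nondecreasing
              (continuous_on_minus _ _ 0 T continuous_on_variation (W11_continuous_on T u Hu)))
    as [N2 [HN2 H2]].
  exists (fun x => N1 x \/ N2 x). split; [apply null_set_or; assumption |].
  intros t Ht Hn.
  destruct (H1 t Ht (fun h => Hn (or_introl h))) as [l1 Hl1].
  destruct (H2 t Ht (fun h => Hn (or_intror h))) as [l2 Hl2].
  exists (l1 - l2).
  apply derivable_pt_lim_ext with (fun s => variation s - (variation s - u s)); [intros; ring |].
  apply (derivable_pt_lim_minus variation (fun s => variation s - u s)); assumption.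
Qed.

End Variation.

Lemma total_variation_on_increment_bound T w u v A B : 0 <= A -> 0 <= B ->
  (forall s t, 0 <= s <= T -> 0 <= t <= T ->
     Rabs (w s - w t) <= A * Rabs (u s - u t) + B * Rabs (v s - v t)) ->
  forall l lo, 0 <= lo -> nonoverlapping lo T l ->
  total_variation_on w l <= A * total_variation_on u l + B * total_variation_on v l.
Proof.
  intros HA HB H l. induction l as [|[a b] l IH]; simpl; intros lo Hlo Hl; [lra |].
  destruct Hl as [H1 [H2 H3]]. pose proof (nonoverlapping_le _ _ _ H3).
  specialize (IH b ltac:(lra) H3). specialize (H b a ltac:(lra) ltac:(lra)). lra.
Qed.

Lemma W11_of_increment_bound T w u v A B : 0 <= A -> 0 <= B -> W11 T u -> W11 T v ->
  (forall s t, 0 <= s <= T -> 0 <= t <= T ->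
     Rabs (w s - w t) <= A * Rabs (u s - u t) + B * Rabs (v s - v t)) ->
  W11 T w.
Proof.
  intros HA HB Hu Hv H eps He.
  destruct (Hu (eps / 2 / (A + 1))) as [d1 [Hd1 H1]]; [apply Rdiv_lt_0_compat; lra |].
  destruct (Hv (eps / 2 / (B + 1))) as [d2 [Hd2 H2]]; [apply Rdiv_lt_0_compat; lra |].
  exists (Rmin d1 d2). split; [apply Rmin_glb_lt; assumption |]. intros l Hl Htl.
  pose proof (Rmin_l d1 d2). pose proof (Rmin_r d1 d2).
  specialize (H1 l Hl ltac:(lra)). specialize (H2 l Hl ltac:(lra)).
  pose proof (total_variation_on_increment_bound T w u v A B HA HB H l 0 (Rle_refl 0) Hl).
  assert (Hfrac : forall K, 0 <= K -> K * (eps / 2 / (K + 1)) < eps / 2).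
  { intros K HK. apply Rmult_lt_reg_r with (K + 1); [lra |].
    replace (K * (eps / 2 / (K + 1)) * (K + 1)) with (K * (eps / 2)) by (field; lra). nra. }
  pose proof (Hfrac A HA). pose proof (Hfrac B HB).
  assert (A * total_variation_on u l <= A * (eps / 2 / (A + 1))) by (apply Rmult_le_compat_l; lra).
  assert (B * total_variation_on v l <= B * (eps / 2 / (B + 1))) by (apply Rmult_le_compat_l; lra).
  lra.
Qed.

(** * The dissipation inequality *)

Lemma lipschitz_of_derive_bound f f' M K :
  (forall x, derivable_pt_lim f x (f' x)) -> (forall x, Rabs x <= M -> Rabs (f' x) <= K) ->
  forall y z, Rabs y <= M -> Rabs z <= M -> Rabs (f y - f z) <= K * Rabs (y - z).
Proof.
  intros Hf HK y z Hy Hz. destruct (MVT_abs f f' z y) as [c [Hc1 Hc2]]; [intros; apply Hf |].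
  rewrite Hc1. apply Rmult_le_compat_r; [apply Rabs_pos |]. apply HK.
  apply Rabs_le. unfold Rabs, Rmin, Rmax in *.
  destruct (Rcase_abs y), (Rcase_abs z), (Rle_dec z y); lra.
Qed.

Lemma positive_lower_bound f M : (forall x, continuity_pt f x) -> (forall x, 0 < f x) ->
  0 <= M -> exists m, 0 < m /\ forall x, Rabs x <= M -> m <= f x.
Proof.
  intros Hf Hpos HM. destruct (continuity_ab_min f (- M) M ltac:(lra)) as [xm [Hxm _]].
  { intros c _; apply Hf. }
  exists (f xm). split; [apply Hpos |]. intros x Hx. apply Hxm.
  unfold Rabs in Hx. destruct (Rcase_abs x); lra.
Qed.

Lemma quotient_diff_le Es Et fs ft m BE K d :
  0 < m -> m <= fs -> m <= ft -> Rabs Et <= BE -> Rabs (ft - fs) <= K * d ->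
  Rabs (Es / fs - Et / ft) <= / m * Rabs (Es - Et) + BE * K / (m * m) * d.
Proof.
  intros Hm Hfs Hft HEt Hf.
  replace (Es / fs - Et / ft) with ((Es - Et) * / fs + Et * (ft - fs) * / (fs * ft)) by (field; lra).
  eapply Rle_trans; [apply Rabs_triang |].
  rewrite !Rabs_mult, !Rabs_inv, (Rabs_pos_eq fs), (Rabs_pos_eq (fs * ft)) by nra.
  apply Rplus_le_compat.
  - rewrite (Rmult_comm (/ m)). apply Rmult_le_compat_l; [apply Rabs_pos | apply Rinv_le_contravar; lra].
  - assert (Hinv : / (fs * ft) <= / (m * m)) by (apply Rinv_le_contravar; nra).
    assert (0 <= / (fs * ft)) by (left; apply Rinv_0_lt_compat; nra).
    replace (BE * K / (m * m) * d) with (BE * (K * d) * / (m * m)) by (field; lra).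
    apply Rmult_le_compat; [| | apply Rmult_le_compat |]; try apply Rmult_le_pos; try apply Rabs_pos;
      assumption || lra.
Qed.

Lemma W11_div_comp T (f f' : R -> R) (eps E : R -> R) : 0 < T ->
  (forall x, derivable_pt_lim f x (f' x)) -> (forall x, 0 < f x) ->
  (forall M, exists K, forall x, Rabs x <= M -> Rabs (f' x) <= K) ->
  W11 T eps -> W11 T E -> W11 T (fun s => E s / f (eps s)).
Proof.
  intros HT Hf Hfpos Hbnd Heps HE.
  destruct (W11_bounded T eps HT Heps) as [Be HBe].
  destruct (W11_bounded T E HT HE) as [BE HBE].
  assert (HBe0 : 0 <= Be) by (specialize (HBe 0 ltac:(lra)); pose proof (Rabs_pos (eps 0)); lra).
  assert (HBE0 : 0 <= BE) by (specialize (HBE 0 ltac:(lra)); pose proof (Rabs_pos (E 0)); lra).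
  destruct (positive_lower_bound f Be) as [m [Hm Hmf]]; [| exact Hfpos | exact HBe0 |].
  { intros x. apply derivable_continuous_pt. exists (f' x). apply Hf. }
  destruct (Hbnd Be) as [K HK].
  assert (HK0 : 0 <= K) by (specialize (HK 0 ltac:(rewrite Rabs_R0; lra)); pose proof (Rabs_pos (f' 0)); lra).
  apply (W11_of_increment_bound T _ E eps (/ m) (BE * K / (m * m))); try assumption.
  - left; apply Rinv_0_lt_compat; exact Hm.
  - apply Rmult_le_pos; [nra | left; apply Rinv_0_lt_compat; nra].
  - intros s t Hs Ht. apply quotient_diff_le; auto.
    rewrite Rabs_minus_sym. apply (lipschitz_of_derive_bound f f' Be K Hf HK); auto.
Qed.

Lemma derivable_pt_lim_sq g t l :
  derivable_pt_lim g t l -> derivable_pt_lim (fun s => g s ^ 2) t (2 * g t * l).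
Proof.
  intros H. apply derivable_pt_lim_ext with (fun s => g s * g s); [intros; ring |].
  replace (2 * g t * l) with (l * g t + g t * l) by ring.
  apply (derivable_pt_lim_mult g g); assumption.
Qed.

Lemma derivable_pt_lim_energy c kappa f f' eps E U t de dE dU :
  derivable_pt_lim f (eps t) (f' (eps t)) -> derivable_pt_lim eps t de ->
  derivable_pt_lim E t dE -> derivable_pt_lim U t dU ->
  derivable_pt_lim (fun s => c / 2 * eps s ^ 2 + kappa / 2 * E s ^ 2 + f (eps s) * U s) t
    (c * eps t * de + kappa * E t * dE + (f' (eps t) * de * U t + f (eps t) * dU)).
Proof.
  intros Hf Heps HE HU.
  replace (c * eps t * de + kappa * E t * dE) with
    (c / 2 * (2 * eps t * de) + kappa / 2 * (2 * E t * dE)) by field.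
  apply (derivable_pt_lim_plus (fun s => c / 2 * eps s ^ 2 + kappa / 2 * E s ^ 2)
                               (fun s => f (eps s) * U s)).
  - apply (derivable_pt_lim_plus (fun s => c / 2 * eps s ^ 2) (fun s => kappa / 2 * E s ^ 2));
      apply derivable_pt_lim_scal, derivable_pt_lim_sq; assumption.
  - apply (derivable_pt_lim_mult (fun s => f (eps s)) U); [| assumption].
    apply (derivable_pt_lim_comp eps f); assumption.
Qed.

Lemma derivable_pt_lim_displacement e kappa eps E P t de dE dP :
  derivable_pt_lim eps t de -> derivable_pt_lim E t dE -> derivable_pt_lim P t dP ->
  derivable_pt_lim (fun s => e * eps s + kappa * E s + P s) t (e * de + kappa * dE + dP).
Proof.
  intros Heps HE HP.
  apply (derivable_pt_lim_plus (fun s => e * eps s + kappa * E s) P); [| assumption].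
  apply (derivable_pt_lim_plus (fun s => e * eps s) (fun s => kappa * E s));
    apply derivable_pt_lim_scal; assumption.
Qed.

Lemma dissipation_identity c kappa e x y fx f'x U dx dy dP dU : 0 < fx ->
  dx * (c * x - e * y + f'x * U) + (e * dx + kappa * dy + dP) * y
    - (c * x * dx + kappa * y * dy + (f'x * dx * U + fx * dU))
  = fx * (y / fx * dP - dU).
Proof. intros Hfx. field. lra. Qed.

Theorem mainTheorem7
  (T : R) (HT : 0 < T)
  (g dg G : R -> R -> R) (mu mu1 : R -> R)
  (Hdg : forall r v, 0 < r -> derivable_pt_lim (g r) v (dg r v))
  (Hg0 : forall r, 0 < r -> g r 0 = 0)
  (Hdg_bnd : forall r v, 0 < r -> 0 <= dg r v <= mu r)
  (Hdg_bnd1 : forall r v, 0 < r -> Rabs v * dg r v <= mu1 r)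
  (Hmu : L1_0_inf mu) (Hmu1 : L1_0_inf mu1)
  (HG : forall r v, 0 < r -> HK_oriented (fun w => w * dg r w) 0 v (G r v))
  (Hdiss : forall q, W11 T q -> forall Pq Uq : R -> R,
      (forall t, 0 <= t <= T -> preisach_at g T q t (Pq t) /\ preisach_at G T q t (Uq t)) ->
      ae_on T (fun t => exists dP dU, derivable_pt_lim Pq t dP /\
                 derivable_pt_lim Uq t dU /\ q t * dP - dU >= 0))
  (c kappa e : R) (Hc : 0 < c) (Hkappa : 0 < kappa)
  (f f' : R -> R)
  (Hf' : forall x, derivable_pt_lim f x (f' x)) (Hf'c : continuity f')
  (Hfpos : forall x, 0 < f x)
  (Hf'bnd : forall M, exists K, forall x, Rabs x <= M -> Rabs (f' x) <= K)
  (eps E : R -> R) (Heps : W11 T eps) (HE : W11 T E)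
  (Pq Uq : R -> R)
  (HPU : forall t, 0 <= t <= T ->
      preisach_at g T (fun s => E s / f (eps s)) t (Pq t) /\
      preisach_at G T (fun s => E s / f (eps s)) t (Uq t)) :
  let sigma := fun t => c * eps t - e * E t + f' (eps t) * Uq t in
  let D := fun t => e * eps t + kappa * E t + Pq t in
  let F := fun t => c / 2 * (eps t)^2 + kappa / 2 * (E t)^2 + f (eps t) * Uq t in
  ae_on T (fun t => exists de dD dF,
      derivable_pt_lim eps t de /\ derivable_pt_lim D t dD /\
      derivable_pt_lim F t dF /\
      de * sigma t + dD * E t - dF >= 0).
Proof.
  intros sigma D F.
  pose proof (Hdiss _ (W11_div_comp T f f' eps E HT Hf' Hfpos Hf'bnd Heps HE) Pq Uq HPU) as Hd.
  pose proof (ae_on_and _ _ _ Hd (ae_on_and _ _ _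
                (W11_derivable_ae T eps HT Heps) (W11_derivable_ae T E HT HE))) as Hall.
  refine (ae_on_impl T _ _ _ Hall).
  intros t _ [[dP [dU [HP [HU Hineq]]]] [[de Hde] [dE HdE]]].
  exists de, (e * de + kappa * dE + dP),
    (c * eps t * de + kappa * E t * dE + (f' (eps t) * de * Uq t + f (eps t) * dU)).
  split; [exact Hde |]. split; [| split].
  - apply derivable_pt_lim_displacement; assumption.
  - apply derivable_pt_lim_energy; auto.
  - unfold sigma. rewrite dissipation_identity by apply Hfpos.
    apply Rle_ge, Rmult_le_pos; [left; apply Hfpos | lra].
Qed.
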